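(* For all integers $v\ge1$ and $0\le i\le v-1$, $$c_{2v,i}=2^{2i}\,\frac{\Gamma(2v-2i)}{\Gamma(2v)}\,s(v,i).$$
   Context: The generalized cosecant numbers $c_{\rho,k}$ are defined as the coefficients of the power series $\left(\frac{x}{\sin x}\right)^{\rho}=\sum_{k\ge0}c_{\rho,k}\,x^{2k}$ (for $|x|<\pi$); in particular $c_{\rho,0}=1$ and $c_{\rho,1}=\rho/6$. For integers $v\ge1$ and $0\le n\le v-1$, $s(v,n)$ denotes the $n$-th elementary symmetric polynomial evaluated at $1^2,2^2,\dots,(v-1)^2$, with $s(v,0)=1$. *)

From HB Require Import structures.
From mathcomp Require Import all_boot all_order all_algebra.
Set Implicit Arguments. Unset Strict Implicit. Unset Printing Implicit Defensive.
Import Order.TTheory GRing.Theory Num.Theory.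
Local Open Scope ring_scope.

(* Taylor coefficients of sin x / x in the variable y = x^2:
   sin x / x = sum_n (-1)^n x^(2n) / (2n+1)!  *)
Definition sinc_coef (n : nat) : rat := (-1) ^+ n / ((2 * n + 1)`!)%:R.

(* Coefficients b_0, ..., b_n of the reciprocal series x / sin x (in y = x^2),
   via the standard recursion b_0 = 1, b_m = - sum_{j=1}^m a_j b_{m-j}
   (a_0 = 1). *)
Fixpoint xcsc_list (n : nat) : seq rat :=
  match n with
  | 0 => [:: 1]
  | n'.+1 =>
      let s := xcsc_list n' in
      rcons s (- \sum_(1 <= j < n'.+2) sinc_coef j * nth 0 s (n'.+1 - j))
  end.

Definition xcsc_coef (m : nat) : rat := nth 0 (xcsc_list m) m.

(* Generalized cosecant number c_{rho,k} for a natural exponent rho: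
   coefficient of x^(2k) in (x / sin x)^rho.  Only coefficients of index
   <= k of the base series influence coefficient k of its rho-th power,
   so a truncation to degree k is used. *)
Definition cosec_num (rho k : nat) : rat :=
  ((\poly_(m < k.+1) xcsc_coef m) ^+ rho)`_k.

(* s(v,n): n-th elementary symmetric polynomial evaluated at
   1^2, 2^2, ..., (v-1)^2 (indices j : 'I_(v-1) stand for j+1). *)
Definition s_sym (v n : nat) : nat :=
  (\sum_(A : {set 'I_(v.-1)} | #|A| == n) \prod_(j in A) (j.+1 ^ 2)%N)%N.

Definition Gamma_nat (n : nat) : nat := (n.-1)`!.

(* Put y = x^2 and let S and B be the power series of sin x / x and of x / sin x in the
   variable y; let E = y d/dy, so that x d/dx = 2E.  The function sin x / x solves
   x f'' + 2 f' + x f = 0, i.e. 4 E^2 S + 2 E S + y S = 0, and cos x = S + 2 E S gives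
   (S + 2 E S)^2 + y S^2 = 1.  Applying E twice to B S = 1 and eliminating, every power
   B^n with n >= 2 satisfies
     4 E^2 (B^n) - 2(2n+1) E (B^n) + n(n+1) B^n + n^2 y B^n = n(n+1) B^(n+2),
   whose coefficient of y^(j+1) is the recurrence
     n(n+1) c_(n+2,j+1) = (n-2j-2)(n-2j-1) c_(n,j+1) + n^2 c_(n,j).
   For n = 2v, after scaling by (2v-1)!, this becomes the recurrence
   s(v+1,j+1) = s(v,j+1) + v^2 s(v,j) of the elementary symmetric functions of the
   squares, which gives the closed form by induction on v.  Power series are handled
   as polynomials truncated at degree K, i.e. identities hold modulo 'X^(K+1). *)

From HB Require Import structures.
From mathcomp Require Import all_boot all_order all_algebra.
From mathcomp Require Import ring lra zify.
Set Implicit Arguments.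
Unset Strict Implicit.
Unset Printing Implicit Defensive.
Import GRing.Theory Num.Theory.
Local Open Scope ring_scope.

Lemma coef_natrM (R : nzSemiRingType) c (p : {poly R}) m :
  (c%:R * p)`_m = c%:R * p`_m.
Proof. by rewrite !mulr_natl coefMn. Qed.

Section EulerOperator.
Variable R : comNzRingType.
Implicit Types p q : {poly R}.

Definition euler_def p := 'X * p^`().
Fact euler_key : unit. Proof. by []. Qed.
Definition euler := locked_with euler_key euler_def.
Canonical euler_unlockable := [unlockable fun euler].

Lemma coef_euler p m : (euler p)`_m = m%:R * p`_m.
Proof.
rewrite unlock /euler_def coefXM coef_deriv.
by case: m => [|m] /=; rewrite ?mul0r ?mulr_natl.
Qed.

Lemma eulerD p q : euler (p + q) = euler p + euler q.
Proof. by rewrite unlock /euler_def derivD mulrDr. Qed.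

Lemma eulerB p q : euler (p - q) = euler p - euler q.
Proof. by rewrite unlock /euler_def derivB mulrBr. Qed.

Lemma eulerM p q : euler (p * q) = euler p * q + p * euler q.
Proof. by rewrite unlock /euler_def derivM mulrDr mulrA -mulrCA mulrA. Qed.

Lemma euler_natr n : euler n%:R = 0.
Proof. by rewrite unlock /euler_def -polyC_natr derivC mulr0. Qed.

Lemma euler1 : euler 1 = 0.
Proof. exact: euler_natr 1. Qed.

Lemma euler_natrM n p : euler (n%:R * p) = n%:R * euler p.
Proof. by rewrite eulerM euler_natr mul0r add0r. Qed.

Lemma eulerX : euler 'X = 'X.
Proof. by rewrite unlock /euler_def derivX mulr1. Qed.

Lemma euler_exp p n : euler (p ^+ n) = n%:R * p ^+ n.-1 * euler p.
Proof. by rewrite unlock /euler_def deriv_exp -mulr_natl; ring. Qed.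

End EulerOperator.

Section DivisibilityByXn.
Variable R : idomainType.
Implicit Types p q : {poly R}.

Lemma dvdp_XnP N p : reflect (forall m, (m < N)%N -> p`_m = 0) ('X^N %| p).
Proof.
apply: (iffP (modp_eq0P _ _)); rewrite -Pdiv.IdomainMonic.take_poly_modp.
  by move=> p_lt m m_lt; have := coef_take_poly N p m; rewrite m_lt p_lt coef0.
by move=> p_lt; apply/polyP=> m; rewrite coef_take_poly coef0; case: ltnP => // /p_lt.
Qed.

Lemma dvdp_Xn_euler N p : 'X^N %| p -> 'X^N %| euler p.
Proof.
by move/dvdp_XnP=> p_lt; apply/dvdp_XnP=> m /p_lt p_m; rewrite coef_euler p_m mulr0.
Qed.

Lemma in_qpoly_Xn_eq0 N p : (in_qpoly ('X^(N.+1) : {poly R}) p == 0) = ('X^(N.+1) %| p).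
Proof.
apply/eqP/modp_eq0P; rewrite -Pdiv.IdomainMonic.take_poly_modp Pdiv.RingMonic.take_poly_rmodp.
  by move/(congr1 val); rewrite /= mk_monic_Xn.
by move=> mod0; apply: val_inj; rewrite /= mk_monic_Xn.
Qed.

End DivisibilityByXn.

Lemma dvdp_Xn_euler_sub (R : numDomainType) N (p : {poly R}) :
  'X^N %| euler p -> 'X^N %| p - (p`_0)%:P.
Proof.
move/dvdp_XnP=> Ep_lt; apply/dvdp_XnP=> -[|m] m_lt; first by rewrite coefB coefC subrr.
have /eqP := Ep_lt _ m_lt; rewrite coef_euler mulf_eq0 pnatr_eq0 /= => /eqP pm0.
by rewrite coefB coefC pm0 subr0.
Qed.

Definition xcsc_poly K : {poly rat} := \poly_(m < K.+1) xcsc_coef m.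
Definition sinc_poly K : {poly rat} := \poly_(m < K.+1) sinc_coef m.

Lemma size_xcsc_list n : size (xcsc_list n) = n.+1.
Proof. by elim: n => //= n IHn; rewrite size_rcons IHn. Qed.

Lemma nth_xcsc_list n m : (m <= n)%N -> nth 0 (xcsc_list n) m = xcsc_coef m.
Proof.
elim: n => [|n IHn]; first by rewrite leqn0 => /eqP ->.
rewrite leq_eqVlt => /predU1P[-> //|m_le_n].
by rewrite /= nth_rcons size_xcsc_list m_le_n IHn.
Qed.

Lemma xcsc_coefS n :
  xcsc_coef n.+1 = - \sum_(1 <= j < n.+2) sinc_coef j * xcsc_coef (n.+1 - j).
Proof.
rewrite {1}/xcsc_coef /= nth_rcons size_xcsc_list ltnn eqxx.
congr (- _); rewrite !big_nat; apply: eq_bigr => j /andP[j_gt0 _].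
by rewrite nth_xcsc_list //; lia.
Qed.

Lemma sinc_coef0 : sinc_coef 0 = 1.
Proof. by rewrite /sinc_coef expr0 invr1. Qed.

Lemma sinc_coefS k :
  ((2 * k + 2) * (2 * k + 3))%:R * sinc_coef k.+1 = - sinc_coef k.
Proof.
have fact_neq0 n : (n`!)%:R != 0 :> rat by rewrite pnatr_eq0 -lt0n fact_gt0.
rewrite /sinc_coef (_ : (2 * k.+1 + 1 = (2 * k + 1).+2)%N); last by lia.
rewrite (factS (2 * k + 1).+1) (factS (2 * k + 1)) !natrM exprS.
rewrite (_ : (2 * k + 1).+2 = 2 * k + 3)%N; last by lia.
rewrite (_ : (2 * k + 1).+1 = 2 * k + 2)%N; last by lia.
field; rewrite fact_neq0 /=.
have k_ge0 := ler0n rat k.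
by apply/andP; split; apply: lt0r_neq0; lra.
Qed.

Lemma xcsc_sinc_conv m :
  \sum_(j < m.+1) sinc_coef j * xcsc_coef (m - j) = (m == 0)%:R.
Proof.
case: m => [|m]; first by rewrite big_ord1 sinc_coef0 mul1r.
rewrite big_ord_recl sinc_coef0 mul1r subn0 xcsc_coefS big_add1 big_mkord.
by rewrite addrC subrr.
Qed.

(* Read s1, s2, b1, b2 as E S, E^2 S, E B, E^2 B; multiplied by B^(N-2), the conclusion
   is the differential equation of B^N. *)
Lemma reciprocal_sinc_identity (R : comNzRingType) (B S s1 s2 b1 b2 y N : R) :
  B * S = 1 ->
  b1 * S + B * s1 = 0 ->
  b2 * S + 2 * b1 * s1 + B * s2 = 0 ->
  4 * s2 + 2 * s1 + y * S = 0 ->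
  (S + 2 * s1) ^+ 2 + y * S ^+ 2 = 1 ->
  N * (N + 1) * B ^+ 4 =
    4 * (N * (N - 1) * b1 ^+ 2 + N * B * b2) - 2 * (2 * N + 1) * N * B * b1
    + N * (N + 1) * B ^+ 2 + N ^+ 2 * y * B ^+ 2.
Proof.
move=> BS b1S b2S ode pyth.
have b1E : b1 = - (B ^+ 2 * s1).
  have : b1 + B ^+ 2 * s1 = B * (b1 * S + B * s1) - b1 * (B * S - 1) by ring.
  by rewrite b1S BS subrr !mulr0 subr0 => /eqP; rewrite addr_eq0 => /eqP.
have b2E : b2 = 2 * B ^+ 3 * s1 ^+ 2 - B ^+ 2 * s2.
  have : b2 - (2 * B ^+ 3 * s1 ^+ 2 - B ^+ 2 * s2) =
      B * (b2 * S + 2 * b1 * s1 + B * s2) - b2 * (B * S - 1) by rewrite b1E; ring.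
  by rewrite b2S BS subrr !mulr0 subr0 => /eqP; rewrite subr_eq0 => /eqP.
apply/eqP; rewrite -subr_eq0 b2E b1E; apply/eqP.
(* T is the cofactor of B S - 1, found by reducing modulo B S = 1. *)
pose T := - 4 * N * (N + 1) * B ^+ 3 * s1 - N * (N + 1) * B ^+ 2 * (1 + B * S)
   - N * y * S * B ^+ 3 - N ^+ 2 * y * B ^+ 2 * (1 + B * S).
transitivity (N * B ^+ 3 * (4 * s2 + 2 * s1 + y * S)
  - N * (N + 1) * B ^+ 4 * ((S + 2 * s1) ^+ 2 + y * S ^+ 2 - 1) - (B * S - 1) * T).
  by rewrite /T; ring.
by rewrite ode pyth BS !subrr mul0r !mulr0 !subr0.
Qed.

Section TruncatedSeries.
Variable K : nat.
Local Notation B := (xcsc_poly K).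
Local Notation S := (sinc_poly K).

Lemma dvdp_xcsc_sinc : 'X^(K.+1) %| B * S - 1.
Proof.
apply/dvdp_XnP=> m m_lt; rewrite coefB coef1 mulrC coefM -xcsc_sinc_conv.
apply/eqP; rewrite subr_eq0; apply/eqP/eq_bigr=> j _.
by rewrite !coef_poly !(leq_ltn_trans _ m_lt) ?leq_subr // -ltnS.
Qed.

Lemma dvdp_sinc_ode :
  'X^(K.+1) %| 4 * euler (euler S) + 2 * euler S + 'X * S.
Proof.
apply/dvdp_XnP=> -[|k] k_lt; rewrite !coefD !coef_natrM !coef_euler coefXM.
  by rewrite !mul0r !mulr0 !add0r.
rewrite /= !coef_poly k_lt ltnW // -[sinc_coef k]opprK -(sinc_coefS k).
ring.
Qed.

Lemma dvdp_sinc_pythagoras :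
  'X^(K.+1) %| (S + 2 * euler S) ^+ 2 + 'X * S ^+ 2 - 1.
Proof.
set G := (S + _) ^+ 2 + _.
have EG : euler G = (S + 2 * euler S) * (4 * euler (euler S) + 2 * euler S + 'X * S).
  by rewrite /G eulerD euler_exp eulerM eulerX euler_exp eulerD euler_natrM; ring.
have G0 : G`_0 = 1.
  rewrite /G coefD coefXM expr2 coef0M coefD coef_natrM coef_euler mul0r mulr0.
  by rewrite addr0 coef_poly /= sinc_coef0 mulr1 addr0.
by rewrite -polyC1 -G0; apply/dvdp_Xn_euler_sub; rewrite EG dvdp_mull // dvdp_sinc_ode.
Qed.

(* In the ring of power series truncated at degree K, the divisibilities above become
   identities, and B is the inverse of S. *)
Local Notation trunc := (in_qpoly ('X^(K.+1) : {poly rat})).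

Lemma trunc_eq0 p : 'X^(K.+1) %| p -> trunc p = 0.
Proof. by rewrite -in_qpoly_Xn_eq0 => /eqP. Qed.

Lemma trunc_eqP p q : reflect (trunc p = trunc q) ('X^(K.+1) %| p - q).
Proof. by rewrite -in_qpoly_Xn_eq0 rmorphB subr_eq0; apply: eqP. Qed.

Lemma dvdp_euler_xcsc_sinc : 'X^(K.+1) %| euler B * S + B * euler S.
Proof.
by have := dvdp_Xn_euler dvdp_xcsc_sinc; rewrite eulerB eulerM euler1 subr0.
Qed.

Lemma dvdp_euler2_xcsc_sinc :
  'X^(K.+1) %| euler (euler B) * S + 2 * euler B * euler S + B * euler (euler S).
Proof.
have := dvdp_Xn_euler dvdp_euler_xcsc_sinc.
by rewrite eulerD (eulerM (euler B)) (eulerM B); congr (_ %| _); ring.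
Qed.

Lemma dvdp_xcsc_reciprocal_identity N :
  'X^(K.+1) %| N * (N + 1) * B ^+ 4 -
    (4 * (N * (N - 1) * euler B ^+ 2 + N * B * euler (euler B))
     - 2 * (2 * N + 1) * N * B * euler B + N * (N + 1) * B ^+ 2 + N ^+ 2 * 'X * B ^+ 2).
Proof.
move: dvdp_xcsc_sinc dvdp_euler_xcsc_sinc dvdp_euler2_xcsc_sinc dvdp_sinc_ode
  dvdp_sinc_pythagoras => /trunc_eqP + /trunc_eq0 + /trunc_eq0 + /trunc_eq0 + /trunc_eqP.
rewrite !(rmorph_nat, rmorph1, rmorphXn, rmorphM, rmorphB, rmorphD) => BS dBS ddBS ode pyth.
apply/trunc_eqP; rewrite !(rmorph_nat, rmorph1, rmorphXn, rmorphM, rmorphB, rmorphD).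
exact: reciprocal_sinc_identity BS dBS ddBS ode pyth.
Qed.

Lemma dvdp_xcsc_pow_ode n : (2 <= n)%N ->
  'X^(K.+1) %| (n * n.+1)%:R * B ^+ n.+2 -
    (4 * euler (euler (B ^+ n)) - (2 * (2 * n + 1))%:R * euler (B ^+ n)
     + (n * n.+1)%:R * B ^+ n + (n ^ 2)%:R * ('X * B ^+ n)).
Proof.
case: n => [|[|k]] // _.
have := dvdp_mull (B ^+ k) (dvdp_xcsc_reciprocal_identity k.+2%:R).
have EBn : euler (B ^+ k.+2) = k.+2%:R * B ^+ k.+1 * euler B by rewrite euler_exp.
rewrite EBn eulerM (eulerM k.+2%:R) euler_natr euler_exp.
by congr (_ %| _); rewrite !exprS; ring.
Qed.

End TruncatedSeries.

Lemma cosec_numE n m K : (m <= K)%N -> cosec_num n m = (xcsc_poly K ^+ n)`_m.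
Proof.
move=> m_le_K; have : 'X^(m.+1) %| xcsc_poly m - xcsc_poly K.
  by apply/dvdp_XnP=> i i_lt; rewrite coefB !coef_poly i_lt (leq_trans i_lt) ?subrr.
move/(dvdp_mulr (\sum_(i < n) xcsc_poly m ^+ (n.-1 - i) * xcsc_poly K ^+ i)).
rewrite -subrXX => /dvdp_XnP/(_ m (ltnSn m)) /eqP.
by rewrite coefB subr_eq0 => /eqP.
Qed.

Lemma cosec_num0 n : cosec_num n 0 = 1.
Proof.
rewrite (cosec_numE n (leqnn 0)) (_ : xcsc_poly 0 = 1) ?expr1n ?coef1 //.
by apply/polyP=> -[|i]; rewrite coef_poly coef1.
Qed.

Lemma cosec_numS n j : (2 <= n)%N ->
  (n * n.+1)%:R * cosec_num n.+2 j.+1 =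
    (n%:R - 2 * j.+1%:R) * (n.+1%:R - 2 * j.+1%:R) * cosec_num n j.+1
    + (n ^ 2)%:R * cosec_num n j.
Proof.
move=> n_ge2; move: (dvdp_xcsc_pow_ode j.+1 n_ge2) => /dvdp_XnP/(_ j.+1 (ltnSn _))/eqP.
rewrite coefB subr_eq0 !(coefB, coefD) !coef_natrM !coef_euler coefXM /= => /eqP ode.
rewrite !(cosec_numE _ (leqnSn j)) !(cosec_numE _ (leqnn j.+1)) ode.
ring.
Qed.

Definition s_sym_poly w : {poly rat} := \prod_(i < w) ((i.+1 ^ 2)%:R *: 'X + 1).

Lemma coef_s_sym_poly w n : (s_sym_poly w)`_n = (s_sym w.+1 n)%:R.
Proof.
rewrite /s_sym_poly bigA_distr coef_sum /s_sym natr_sum [in RHS]big_mkcond /=.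
apply: eq_bigr => A _.
rewrite -big_mkcond scaler_prod prodr_const coefZ coefXn /= -natr_prod.
by rewrite eq_sym; case: eqP; rewrite ?mulr1 ?mulr0.
Qed.

Lemma s_symS w j : s_sym w.+2 j.+1 = (s_sym w.+1 j.+1 + w.+1 ^ 2 * s_sym w.+1 j)%N.
Proof.
apply/eqP; rewrite -(eqr_nat rat) natrD natrM -!coef_s_sym_poly.
by rewrite /s_sym_poly big_ord_recr /= mulrDr mulr1 coefD -scalerAr coefZ coefMX addrC.
Qed.

Lemma s_sym0 v : s_sym v 0 = 1%N.
Proof.
rewrite /s_sym (big_pred1 set0) ?big_set0 // => A.
by rewrite cards_eq0.
Qed.

Lemma s_sym_eq0 w n : (w < n)%N -> s_sym w.+1 n = 0%N.
Proof.
move=> w_lt_n; rewrite /s_sym big_pred0 // => A /=.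
apply/negbTE; rewrite neq_ltn (leq_ltn_trans _ w_lt_n) //.
by rewrite (leq_trans (max_card A)) ?card_ord.
Qed.

Lemma cosec_num_even w j : (j <= w)%N ->
  cosec_num (2 * w.+1) j * ((2 * w).+1`!)%:R =
    (4 ^ j * (2 * (w - j)).+1`! * s_sym w.+1 j)%:R.
Proof.
elim: w j => [|w IHw] [|j] // j_le;
  try by rewrite cosec_num0 mul1r expn0 mul1n subn0 s_sym0 muln1.
have {j_le} [d w_eq] : exists d, w = (j + d)%N by exists (w - j)%N; lia.
subst w.
have n_ge2 : (2 <= 2 * (j + d).+1)%N by lia.
have rec := cosec_numS j n_ge2.
have IH0 := IHw j (leq_addr d j).
have IH1 : ((2 * d) * (2 * d).+1)%:R *
      (cosec_num (2 * (j + d).+1) j.+1 * ((2 * (j + d)).+1`!)%:R)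
    = (4 ^ j.+1 * (2 * d).+1`! * s_sym (j + d).+1 j.+1)%:R.
  case: d {IH0 rec n_ge2} IHw => [|d] IHw; first by rewrite addn0 s_sym_eq0 // !muln0 mul0r.
  rewrite IHw; last by rewrite addnS ltnS leq_addr.
  rewrite addnS subSS addKn -natrM (_ : 2 * d.+1 = (2 * d).+2)%N; last by lia.
  by rewrite !factS; congr _%:R; ring.
rewrite addKn in IH0; rewrite subSS addKn s_symS.
rewrite (_ : 4 ^ j.+1 * (2 * d).+1`! * (_ + _) =
    4 ^ j.+1 * (2 * d).+1`! * s_sym (j + d).+1 j.+1
    + (4 * (j + d).+1 ^ 2) * (4 ^ j * (2 * d).+1`! * s_sym (j + d).+1 j))%N;
  last by rewrite expnS; ring.
rewrite natrD (natrM _ (4 * _)) -IH0 -IH1.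
transitivity (((2 * (j + d).+1 * (2 * (j + d).+1).+1)%:R * cosec_num (2 * (j + d).+1).+2 j.+1)
    * ((2 * (j + d)).+1`!)%:R).
  rewrite (_ : 2 * (j + d).+2 = (2 * (j + d).+1).+2)%N; last by lia.
  rewrite (_ : 2 * (j + d).+1 = (2 * (j + d)).+2)%N; last by lia.
  by rewrite !factS; ring.
rewrite rec; ring.
Qed.

Theorem mainTheorem5 (v i : nat) :
  (1 <= v)%N -> (i <= v - 1)%N ->
  cosec_num (2 * v) i =
    (2 ^ (2 * i))%:R * ((Gamma_nat (2 * v - 2 * i))%:R / (Gamma_nat (2 * v))%:R)
    * (s_sym v i)%:R.
Proof.
case: v => [|w] // _; rewrite subn1 /= => i_le_w.
rewrite /Gamma_nat (_ : (2 * w.+1).-1 = (2 * w).+1)%N; last by lia.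
rewrite (_ : (2 * w.+1 - 2 * i).-1 = (2 * (w - i)).+1)%N; last by lia.
have fact_neq0 : ((2 * w).+1`!)%:R != 0 :> rat by rewrite pnatr_eq0 -lt0n fact_gt0.
apply: (mulIf fact_neq0).
rewrite cosec_num_even // expnM (natrM _ (_ * _)) (natrM _ (_ ^ _)).
by move: fact_neq0; set F := _%:R => F_neq0; field.
Qed.
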